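(* Let $\mu>0$ be an integer upper bound and $d>1$ a discount factor. Let $v\in\mathbb{Q}$ be a threshold value with representation $v=v[0]v[1]\dots v[m](v[m+1]v[m+2]\dots v[n])^{\omega}$. Let $W$ be a non-empty finite weight sequence over $\{-\mu,\dots,\mu\}$. Then: (1) $\mathrm{gap}(W-v[\dots|W|])>\frac1d\cdot\mathrm{DS}(v[|W|\dots],d)+\frac{\mu}{d-1}$ if and only if for all infinite extensions $Y\in\{-\mu,\dots,\mu\}^{\omega}$, $\mathrm{DS}(W\cdot Y,d)>v$; (2) $\mathrm{gap}(W-v[\dots|W|])\le\frac1d\cdot\mathrm{DS}(v[|W|\dots],d)-\frac{\mu}{d-1}$ if and only if for all infinite extensions $Y\in\{-\mu,\dots,\mu\}^{\omega}$, $\mathrm{DS}(W\cdot Y,d)\le v$.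
   Context: For a finite or infinite sequence $A=a_0a_1\dots$, $\mathrm{DS}(A,d)=\sum_i a_i/d^i$. The threshold $v$ is represented by an ultimately periodic sequence of integers $v[0]v[1]\dots v[m](v[m+1]\dots v[n])^{\omega}$ whose discounted sum with factor $d$ equals $v$; below this infinite sequence is also denoted $v$. For $i\ge0$, $v[\dots i]$ denotes the prefix of length $i$ of this infinite sequence and $v[i\dots]$ the remaining infinite suffix (starting at index $i$). For finite sequences of equal length, $W-U$ denotes their pointwise difference. The recoverable gap of a finite sequence $U$ is $\mathrm{gap}(\varepsilon)=0$ for the empty sequence and $\mathrm{gap}(U)=d^{|U|-1}\cdot\mathrm{DS}(U,d)$ otherwise. *)

From Stdlib Require Import Reals QArith ZArith List Lia Lra.
From Coquelicot Require Import Coquelicot.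
Import ListNotations.
Open Scope R_scope.

Definition DSfin (U : list Z) (d : R) : R :=
  fold_right Rplus 0
    (map (fun i => IZR (nth i U 0%Z) / d ^ i) (seq 0 (length U))).

Definition DSinf (A : nat -> Z) (d : R) : R :=
  Series (fun i => IZR (A i) / d ^ i).

Definition gap (U : list Z) (d : R) : R :=
  match U with
  | [] => 0
  | _ => d ^ (length U - 1) * DSfin U d
  end.

Definition vpre (v : nat -> Z) (i : nat) : list Z := map v (seq 0 i).

Definition vsuf (v : nat -> Z) (i : nat) : nat -> Z := fun j => v (i + j)%nat.

Definition ldiff (W U : list Z) : list Z :=
  map (fun p => (fst p - snd p)%Z) (combine W U).

Definition cat_inf (W : list Z) (Y : nat -> Z) : nat -> Z :=
  fun i => if (i <? length W)%nat then nth i W 0%Z else Y (i - length W)%nat.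

(* v = v[0]..v[m] (v[m+1]..v[n])^omega *)
Definition ult_periodic (v : nat -> Z) (m n : nat) : Prop :=
  (m < n)%nat /\ forall i, (m < i)%nat -> v (i + (n - m))%nat = v i.

Definition bounded_by (mu : Z) (a : Z) : Prop := (- mu <= a <= mu)%Z.

From Stdlib Require Import Reals QArith ZArith List Lia Lra.
From Coquelicot Require Import Coquelicot.
Import ListNotations.
Open Scope R_scope.

(* Write k = |W|.  Discounted sums split at position k: DS(W.Y) = DS(W) + DS(Y)/d^k
   and v = DS(v[..k]) + DS(v[k..])/d^k, hence
     d^k (DS(W.Y) - v) = d gap(W - v[..k]) + DS(Y) - DS(v[k..]).
   As Y ranges over {-mu..mu}^omega, DS(Y) ranges over [-mu d/(d-1), mu d/(d-1)], both
   ends being attained by constant sequences; so DS(W.Y) > v (resp. <= v) holds for every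
   Y exactly when it holds at the lower (resp. upper) end, which is the gap condition. *)

Definition DS_summable (A : nat -> Z) (d : R) : Prop :=
  ex_series (fun i => IZR (A i) / d ^ i).

Lemma fold_right_Rplus_scal (c : R) (g : nat -> R) (l : list nat) :
  fold_right Rplus 0 (map (fun i => c * g i) l) = c * fold_right Rplus 0 (map g l).
Proof. induction l as [|i l IH]; simpl; [ring | rewrite IH; ring]. Qed.

Lemma DSfin_cons (d : R) (a : Z) (W : list Z) :
  DSfin (a :: W) d = IZR a + / d * DSfin W d.
Proof.
  unfold DSfin; cbn [length seq map fold_right nth pow].
  rewrite <- seq_shift, map_map, <- fold_right_Rplus_scal.
  f_equal; [field_simplify; lra |].
  f_equal; apply map_ext; intro i; simpl.
  unfold Rdiv; rewrite Rinv_mult; ring.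
Qed.

Lemma DSfin_ldiff (d : R) (W U : list Z) :
  length W = length U -> DSfin (ldiff W U) d = DSfin W d - DSfin U d.
Proof.
  revert U; induction W as [|a W IH]; intros [|b U] HWU; simpl in HWU; try discriminate.
  - unfold DSfin; simpl; ring.
  - change (ldiff (a :: W) (b :: U)) with ((a - b)%Z :: ldiff W U).
    rewrite !DSfin_cons, IH, minus_IZR by lia; ring.
Qed.

Lemma gap_ldiff (d : R) (W U : list Z) :
  W <> [] -> length U = length W ->
  gap (ldiff W U) d = d ^ (length W - 1) * (DSfin W d - DSfin U d).
Proof.
  intros HW HUW.
  assert (Hlen : length (ldiff W U) = length W).
  { unfold ldiff; rewrite length_map, length_combine, HUW; lia. }
  unfold gap; destruct (ldiff W U) eqn:E.
  - destruct W; [congruence | discriminate Hlen].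
  - rewrite Hlen, <- E, DSfin_ldiff by auto; reflexivity.
Qed.

Lemma cat_inf_vpre_vsuf (v : nat -> Z) (k i : nat) :
  cat_inf (vpre v k) (vsuf v k) i = v i.
Proof.
  unfold cat_inf, vpre, vsuf; rewrite length_map, length_seq.
  destruct (Nat.ltb_spec i k).
  - rewrite nth_indep with (d' := v 0%nat) by (rewrite length_map, length_seq; lia).
    rewrite map_nth, seq_nth; auto.
  - f_equal; lia.
Qed.

Lemma prefix_bounded (f : nat -> R) (N : nat) :
  exists B, forall i, (i <= N)%nat -> f i <= B.
Proof.
  induction N as [|N [B HB]].
  - exists (f 0%nat); intros i Hi; replace i with 0%nat by lia; lra.
  - exists (Rmax B (f (S N))); intros i Hi.
    destruct (Nat.eq_dec i (S N)) as [-> | Hne]; [apply Rmax_r |].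
    eapply Rle_trans; [apply HB; lia | apply Rmax_l].
Qed.

Lemma ult_periodic_reduce (v : nat -> Z) (m n : nat) :
  ult_periodic v m n -> forall i, exists j, (j <= n)%nat /\ v i = v j.
Proof.
  intros [Hmn Hper] i; induction i as [i IH] using (well_founded_induction lt_wf).
  destruct (Nat.le_gt_cases i n) as [Hi | Hi]; [exists i; auto |].
  destruct (IH (i - (n - m))%nat) as [j [Hj Hvj]]; [lia |].
  exists j; split; [exact Hj |].
  rewrite <- Hvj, <- (Hper (i - (n - m))%nat) by lia; f_equal; lia.
Qed.

Lemma ult_periodic_bounded (v : nat -> Z) (m n : nat) :
  ult_periodic v m n -> exists B, forall i, Rabs (IZR (v i)) <= B.
Proof.
  intros Hrep.
  destruct (prefix_bounded (fun j => Rabs (IZR (v j))) n) as [B HB].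
  exists B; intro i.
  destruct (ult_periodic_reduce v m n Hrep i) as [j [Hj ->]]; auto.
Qed.

Lemma Series_zero : Series (fun _ => 0) = 0.
Proof.
  rewrite <- (Series_ext (fun n => 0 * 0)) by (intro; ring).
  rewrite Series_scal_l; ring.
Qed.

Section Discounted.

Variable d : R.
Hypothesis Hd : 1 < d.

Lemma pow_d_pos (i : nat) : 0 < d ^ i.
Proof. apply pow_lt; lra. Qed.

Lemma is_series_inv_pow : is_series (fun i => / d ^ i) (d / (d - 1)).
Proof.
  replace (d / (d - 1)) with (/ (1 - / d)) by (field; lra).
  eapply is_series_ext; [intro i; apply pow_inv |].
  apply is_series_geom.
  rewrite Rabs_pos_eq by (left; apply Rinv_0_lt_compat; lra).
  rewrite <- Rinv_1; apply Rinv_lt_contravar; lra.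
Qed.

Lemma DS_summable_bounded (A : nat -> Z) (B : R) :
  (forall i, Rabs (IZR (A i)) <= B) -> DS_summable A d.
Proof.
  intros HB.
  apply (@ex_series_le R_AbsRing R_CompleteNormedModule _ (fun i => B * / d ^ i)).
  - intro i; change norm with Rabs; simpl.
    unfold Rdiv; rewrite Rabs_mult, (Rabs_pos_eq (/ d ^ i))
      by (left; apply Rinv_0_lt_compat, pow_d_pos).
    apply Rmult_le_compat_r; [left; apply Rinv_0_lt_compat, pow_d_pos | apply HB].
  - apply (ex_series_scal_l B (fun i => / d ^ i)); eexists; apply is_series_inv_pow.
Qed.

Lemma DS_summable_bounded_by (mu : Z) (Y : nat -> Z) :
  (forall i, bounded_by mu (Y i)) -> DS_summable Y d.
Proof.
  intros HY; apply (DS_summable_bounded Y (IZR mu)); intro i.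
  destruct (HY i) as [Hlo Hhi]; apply IZR_le in Hlo, Hhi.
  rewrite opp_IZR in Hlo; apply Rabs_le; lra.
Qed.

Lemma DSinf_const (c : Z) : DSinf (fun _ => c) d = IZR c * (d / (d - 1)).
Proof.
  unfold DSinf, Rdiv at 1; rewrite (Series_scal_l (IZR c) (fun i => / d ^ i)).
  f_equal; apply is_series_unique, is_series_inv_pow.
Qed.

Lemma DSinf_le (A B : nat -> Z) :
  DS_summable A d -> DS_summable B d -> (forall i, (A i <= B i)%Z) ->
  DSinf A d <= DSinf B d.
Proof.
  intros HA HB HAB; unfold DSinf.
  apply Rminus_le_0; rewrite <- Series_minus by assumption.
  rewrite <- Series_zero; apply Series_le; [| exact (ex_series_minus _ _ HB HA)].
  intro i; split; [lra |].
  unfold Rdiv; rewrite <- Rmult_minus_distr_r, <- minus_IZR.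
  apply Rmult_le_pos; [apply IZR_le; specialize (HAB i); lia |].
  left; apply Rinv_0_lt_compat, pow_d_pos.
Qed.

Lemma DSinf_bounded_by (mu : Z) (Y : nat -> Z) :
  (forall i, bounded_by mu (Y i)) ->
  - (IZR mu * (d / (d - 1))) <= DSinf Y d <= IZR mu * (d / (d - 1)).
Proof.
  intros HY.
  assert (HYs : DS_summable Y d) by (apply (DS_summable_bounded_by mu), HY).
  assert (Hconst : forall c, (Z.abs c <= mu)%Z -> DS_summable (fun _ => c) d).
  { intros c Hc; apply (DS_summable_bounded_by mu); intro; unfold bounded_by; lia. }
  assert (Hmu : (0 <= mu)%Z) by (destruct (HY 0%nat); lia).
  rewrite Ropp_mult_distr_l, <- opp_IZR, <- !DSinf_const; split.
  - apply DSinf_le; [apply Hconst; lia | exact HYs | intro i; apply (HY i)].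
  - apply DSinf_le; [exact HYs | apply Hconst; lia | intro i; apply (HY i)].
Qed.

Lemma DS_summable_incr_1 (A : nat -> Z) :
  DS_summable A d <-> DS_summable (fun i => A (S i)) d.
Proof.
  unfold DS_summable; rewrite ex_series_incr_1.
  assert (Hterm : forall i, IZR (A (S i)) / d ^ S i = / d * (IZR (A (S i)) / d ^ i)).
  { intro i; simpl; unfold Rdiv; rewrite Rinv_mult; ring. }
  split; intro Hex.
  - apply (ex_series_ext (fun i => d * (IZR (A (S i)) / d ^ S i))).
    + intro i; rewrite Hterm, <- Rmult_assoc, Rinv_r, Rmult_1_l by lra; reflexivity.
    + exact (ex_series_scal_l d _ Hex).
  - apply (ex_series_ext (fun i => / d * (IZR (A (S i)) / d ^ i))).
    + intro i; rewrite Hterm; reflexivity.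
    + exact (ex_series_scal_l (/ d) _ Hex).
Qed.

Lemma DSinf_incr_1 (A : nat -> Z) :
  DS_summable A d -> DSinf A d = IZR (A 0%nat) + / d * DSinf (fun i => A (S i)) d.
Proof.
  intros HA; unfold DSinf; rewrite Series_incr_1 by exact HA.
  rewrite <- Series_scal_l; simpl; rewrite Rdiv_1_r; f_equal.
  apply Series_ext; intro i; simpl; unfold Rdiv; rewrite Rinv_mult; ring.
Qed.

Lemma DS_summable_vsuf (v : nat -> Z) (k : nat) :
  DS_summable v d -> DS_summable (vsuf v k) d.
Proof.
  intros Hv; induction k as [|k IH]; [exact Hv |].
  apply DS_summable_incr_1 in IH.
  eapply ex_series_ext; [| exact IH].
  intro i; unfold vsuf; rewrite Nat.add_succ_r; reflexivity.
Qed.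

Lemma DS_summable_cat_inf (W : list Z) (Y : nat -> Z) :
  DS_summable Y d -> DS_summable (cat_inf W Y) d.
Proof.
  intros HY; induction W as [|a W IH].
  - eapply ex_series_ext; [| exact HY].
    intro i; unfold cat_inf; simpl; rewrite Nat.sub_0_r; reflexivity.
  - apply DS_summable_incr_1, IH.
Qed.

Lemma DSinf_cat_inf (W : list Z) (Y : nat -> Z) :
  DS_summable Y d -> DSinf (cat_inf W Y) d = DSfin W d + / d ^ length W * DSinf Y d.
Proof.
  intros HY; induction W as [|a W IH].
  - unfold DSfin; simpl; rewrite Rinv_1, Rplus_0_l, Rmult_1_l.
    apply Series_ext; intro i; unfold cat_inf; simpl; rewrite Nat.sub_0_r; reflexivity.
  - rewrite DSinf_incr_1 by apply DS_summable_cat_inf, HY.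
    change (DSinf (fun i => cat_inf (a :: W) Y (S i)) d) with (DSinf (cat_inf W Y) d).
    change (cat_inf (a :: W) Y 0) with a.
    rewrite IH, DSfin_cons; simpl; rewrite Rinv_mult; ring.
Qed.

Lemma DSinf_vpre_vsuf (v : nat -> Z) (k : nat) :
  DS_summable v d -> DSinf v d = DSfin (vpre v k) d + / d ^ k * DSinf (vsuf v k) d.
Proof.
  intros Hv.
  replace k with (length (vpre v k)) at 2 by (unfold vpre; rewrite length_map, length_seq; auto).
  rewrite <- DSinf_cat_inf by (apply DS_summable_vsuf, Hv).
  unfold DSinf; apply Series_ext; intro i; rewrite cat_inf_vpre_vsuf; reflexivity.
Qed.


Lemma DSinf_cat_inf_sub (v : nat -> Z) (W : list Z) (Y : nat -> Z) :
  W <> [] -> DS_summable v d -> DS_summable Y d ->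
  d ^ length W * (DSinf (cat_inf W Y) d - DSinf v d)
  = d * gap (ldiff W (vpre v (length W))) d + DSinf Y d - DSinf (vsuf v (length W)) d.
Proof.
  intros HW Hv HY.
  rewrite gap_ldiff, DSinf_cat_inf, (DSinf_vpre_vsuf v (length W))
    by (try (unfold vpre; rewrite length_map, length_seq); auto).
  assert (Hk : d ^ length W = d * d ^ (length W - 1)).
  { destruct W as [|a W]; [congruence |]; simpl; rewrite Nat.sub_0_r; reflexivity. }
  rewrite Hk; field; split; [apply Rgt_not_eq, pow_d_pos | lra].
Qed.

End Discounted.

Theorem lemma3 (mu : Z) (d : R) (vq : Q) (vs : nat -> Z) (m n : nat)
  (W : list Z)
  (Hmu : (0 < mu)%Z) (Hd : 1 < d)
  (Hrep : ult_periodic vs m n) (Hval : DSinf vs d = Q2R vq)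
  (HWne : W <> []) (HW : List.Forall (bounded_by mu) W) :
  (gap (ldiff W (vpre vs (length W))) d >
     / d * DSinf (vsuf vs (length W)) d + IZR mu / (d - 1)
   <-> forall Y : nat -> Z, (forall i, bounded_by mu (Y i)) ->
         DSinf (cat_inf W Y) d > Q2R vq)
  /\
  (gap (ldiff W (vpre vs (length W))) d <=
     / d * DSinf (vsuf vs (length W)) d - IZR mu / (d - 1)
   <-> forall Y : nat -> Z, (forall i, bounded_by mu (Y i)) ->
         DSinf (cat_inf W Y) d <= Q2R vq).
Proof.
  destruct (ult_periodic_bounded vs m n Hrep) as [B HB].
  pose proof (DS_summable_bounded d Hd vs B HB) as Hv.
  set (G := gap (ldiff W (vpre vs (length W))) d).
  set (Dv := DSinf (vsuf vs (length W)) d).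
  set (c := IZR mu / (d - 1)).
  assert (Hc : IZR mu * (d / (d - 1)) = d * c) by (unfold c; field; lra).
  assert (Hdk : 0 < d ^ length W) by (apply pow_d_pos, Hd).
  assert (Hkey : forall Y, (forall i, bounded_by mu (Y i)) ->
            d ^ length W * (DSinf (cat_inf W Y) d - Q2R vq) = d * G + DSinf Y d - Dv
            /\ - (d * c) <= DSinf Y d <= d * c).
  { intros Y HY; rewrite <- Hval, <- Hc; split.
    - apply DSinf_cat_inf_sub; auto; apply (DS_summable_bounded_by d Hd mu), HY.
    - apply DSinf_bounded_by; auto. }
  assert (Hconst : forall c0, (c0 = mu \/ c0 = - mu)%Z -> forall i : nat, bounded_by mu c0).
  { intros c0 [-> | ->] i; unfold bounded_by; lia. }
  replace (/ d * Dv + c) with ((Dv + d * c) / d) by (field; lra).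
  replace (/ d * Dv - c) with ((Dv - d * c) / d) by (field; lra).
  unfold Rgt; rewrite Rlt_div_l, <- Rle_div_r by lra.
  split; split.
  - intros HG Y HY; destruct (Hkey Y HY) as [E HYr]; nra.
  - intros Hall.
    destruct (Hkey _ (Hconst (- mu)%Z (or_intror eq_refl))) as [E _].
    specialize (Hall _ (Hconst (- mu)%Z (or_intror eq_refl))).
    rewrite DSinf_const, opp_IZR, <- Ropp_mult_distr_l, Hc in E by exact Hd; nra.
  - intros HG Y HY; destruct (Hkey Y HY) as [E HYr]; nra.
  - intros Hall.
    destruct (Hkey _ (Hconst mu (or_introl eq_refl))) as [E _].
    specialize (Hall _ (Hconst mu (or_introl eq_refl))).
    rewrite DSinf_const, Hc in E by exact Hd; nra.
Qed.
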